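(* Let $B>0$ and $\beta>0$. Then $\mathcal{M}_{B,\beta}$ is equal in distribution to $\mathcal{M}_{B,\mathrm{flip}}\circ\mathcal{M}_{B,0}$; that is, for every $\boldsymbol g\in\mathbb{R}^d$ and every coordinate $i\in[d]$, $\Pr\big[[\mathcal{M}_{B,\beta}]_i(\boldsymbol g)=1\big]=\Pr\big[\mathcal{M}_{B,\mathrm{flip}}\big([\mathcal{M}_{B,0}]_i(\boldsymbol g)\big)=1\big]$, where the flip is applied independently of the randomness of $\mathcal{M}_{B,0}$.
   Context: For $B>0$, $\mathrm{clip}\{g,B\}=\max\{-B,\min\{B,g\}\}$. For $\beta\ge0$, the randomized compressor $\mathcal{M}_{B,\beta}:\mathbb{R}^d\to\{-1,1\}^d$ acts independently on each coordinate: $[\mathcal{M}_{B,\beta}]_i(\boldsymbol g)=1$ with probability $\frac{B+\beta+\mathrm{clip}\{g_i,B\}}{2B+2\beta}$ and $=-1$ otherwise. The DP-flip mechanism $\mathcal{M}_{B,\mathrm{flip}}:\{-1,1\}\to\{-1,1\}$ (depending on $B$ and $\beta$) maps $b\in\{-1,1\}$ to $b$ with probability $\frac{2B+\beta}{2(B+\beta)}$ and to $-b$ otherwise; $\mathcal{M}_{B,\mathrm{flip}}\circ\mathcal{M}_{B,0}$ applies it coordinate-wise to the output of $\mathcal{M}_{B,0}$. *)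

From mathcomp Require Import all_boot all_order all_algebra.
Set Implicit Arguments. Unset Strict Implicit. Unset Printing Implicit Defensive.
Import Order.TTheory GRing.Theory Num.Theory.
Local Open Scope ring_scope.

(* Outputs in {-1,1} are encoded as bool: true = +1, false = -1.
   A randomized map into {-1,1} is represented by its (discrete) output law:
   a probability mass function  bool -> R. *)

Section Defs.
Variable R : realFieldType.

Definition clip (g B : R) : R := Num.max (- B) (Num.min B g).

Definition M_law (B beta : R) (d : nat) (g : 'I_d -> R) (i : 'I_d) (b : bool) : R :=
  let p1 := (B + beta + clip (g i) B) / (2 * B + 2 * beta) in
  if b then p1 else 1 - p1.

Definition flip_kernel (B beta : R) (b b' : bool) : R :=
  let keep := (2 * B + beta) / (2 * (B + beta)) in
  if b' == b then keep else 1 - keep.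

Definition compose_flip (B beta : R) (mu : bool -> R) (b' : bool) : R :=
  \sum_(b : bool) mu b * flip_kernel B beta b b'.
End Defs.

From mathcomp Require Import all_boot all_order all_algebra.
From mathcomp Require Import ring.
Import Order.TTheory GRing.Theory Num.Theory.
Local Open Scope ring_scope.

(* Measure every law on {-1,1} by the deviation of P[1] from 1/2.  For
   M_{B,beta} this deviation is clip/(2(B+beta)).  The flip keeps its input
   with probability 1/2 + B/(2(B+beta)), so it multiplies the deviation of
   any input law by B/(B+beta); applied to M_{B,0}, whose deviation is
   clip/(2B), it produces exactly the deviation of M_{B,beta}. *)

Section FlipComposition.
Variable R : realFieldType.

Lemma M_law_false (B beta : R) (d : nat) (g : 'I_d -> R) (i : 'I_d) :
  M_law B beta g i false = 1 - M_law B beta g i true.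
Proof. by []. Qed.

Lemma M_law_true_centered (B beta : R) (d : nat) (g : 'I_d -> R) (i : 'I_d) :
  B + beta != 0 ->
  M_law B beta g i true = 2^-1 + clip (g i) B / (2 * (B + beta)).
Proof.
by move=> nz_Bbeta; rewrite /M_law /= -mulrDr; field.
Qed.

Lemma compose_flip_true_centered (B beta : R) (mu : bool -> R) :
  B + beta != 0 -> mu false = 1 - mu true ->
  compose_flip B beta mu true = 2^-1 + B / (B + beta) * (mu true - 2^-1).
Proof.
move=> nz_Bbeta mu_false.
by rewrite /compose_flip big_bool /flip_kernel /= mu_false; field.
Qed.

End FlipComposition.

Theorem proposition1 (R : realFieldType) (B beta : R) (d : nat)
  (hB : 0 < B) (hbeta : 0 < beta) (g : 'I_d -> R) (i : 'I_d) :
  M_law B beta g i true = compose_flip B beta (M_law B 0 g i) true.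
Proof.
have nz_B : B != 0 by rewrite gt_eqF.
have nz_Bbeta : B + beta != 0 by rewrite gt_eqF ?addr_gt0.
rewrite compose_flip_true_centered ?M_law_false // !M_law_true_centered ?addr0 //.
by field; rewrite nz_B nz_Bbeta.
Qed.
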